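(* Let $\mathbf A_{\mathrm{Chem}}=\mathbf{uGraph}/T_{\mathcal A}$ be the ambient category of a Chem model with structural constraint $c_{\mathrm{Chem}}$, considered with DPO-type restricted rewriting. Let $R:=(r,c_I)$ be a rule with condition, where $r=(O\hookleftarrow K\hookrightarrow I)$ is a linear rule in $\mathbf A_{\mathrm{Chem}}$ whose restriction to vertex sets $V_O\leftarrow V_K\to V_I$ is a span of isomorphisms. Let $\overline R:=[(r,\overline{c_I})]_{\bar\sim}$ and $\overline R_{id}:=[(r_{id},\overline{c_I})]_{\bar\sim}$ with $r_{id}:=(I\xleftarrow{id}I\xrightarrow{id}I)$. Then for every state $X$ (object of $\mathbf A_{\mathrm{Chem}}$ with $X\models c_{\mathrm{Chem}}$), $\langle|\overline{\mathbb O}(\bar\delta(\overline R))|X\rangle=\langle|\overline{\mathbb O}(\bar\delta(\overline R_{id}))|X\rangle$; moreover $\overline{\mathbb O}(\bar\delta(\overline R))=\overline{\mathbb O}(\bar\delta(\overline R_{id}))$ as linear operators on $\hat{\overline{\mathbf S}}_{\mathrm{Chem}}$.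
   Context: $\mathbf{uGraph}$ is the category of finite undirected multigraphs $(E,V,i:E\to\mathcal P^{(1,2)}(V))$ (edges have one or two endpoints), $\mathcal M$ the component-wise injective morphisms. A Chem model fixes a finite set of atom types $\mathcal A$, bond types $\{-,=,\equiv\}$, and a type graph $T_{\mathcal A}$ with one vertex type, one loop-edge type per atom type and one edge type per bond type; $\mathbf A_{\mathrm{Chem}}$ is the slice category of $\mathbf{uGraph}$ over $T_{\mathcal A}$ (typed undirected multigraphs), and $c_{\mathrm{Chem}}$ is a fixed constraint (a nested condition over the empty graph $\varnothing$, built from $\mathsf{true}$, $\exists(f,c)$ for $f\in\mathcal M$, $\neg$, $\wedge$) encoding the chemical laws; states are objects $X$ with $X\models c_{\mathrm{Chem}}$, i.e. $(\varnothing\hookrightarrow X)\models c_{\mathrm{Chem}}$, and $\hat{\overline{\mathbf S}}_{\mathrm{Chem}}$ is the real vector space with basis $|X\rangle$ indexed by isomorphism classes of states, with $\langle|X\rangle:=1$. DPO direct derivation of $(r,c)$ along $m:I\hookrightarrow X$ in $\mathcal M$: admissible if $m\models c$ and a pushout complement of $K\hookrightarrow I\to X$ exists; result is the pushout along $K\hookrightarrow O$. $\mathsf{Shift}(f,c)$ is the condition with $g\circ f\models c\iff g\models\mathsf{Shift}(f,c)$; $\mathsf{Trans}(r,c_O)$ the condition over $I$ with $m\models\mathsf{Trans}(r,c_O)$ iff the comatch satisfies $c_O$, for admissible matches $m$. The constraint-preserving completion of $c_I$ for $r$ is $\overline{c_I}:=\mathsf{Shift}(\varnothing\hookrightarrow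 I,c_{\mathrm{Chem}})\Rightarrow\big(c_I\wedge\mathsf{Trans}(r,\mathsf{Shift}(\varnothing\hookrightarrow O,c_{\mathrm{Chem}}))\wedge\mathsf{Shift}(\varnothing\hookrightarrow I,c_{\mathrm{Chem}})\big)$. $(r,c)\mathrel{\bar\sim}(r',c')$ iff $r\cong r'$ and their completed conditions are equivalent on admissible matches; $\bar\delta$ denotes basis vectors indexed by $\bar\sim$-classes. The restricted DPO representation is $\bar\rho(\bar\delta(R'))|X\rangle=\sum_{\bar m}|\overline{R'}_{\bar m}(X)\rangle$ (sum over DPO-admissible matches of the completed rule into $X$), and the restricted DPO jump-closure operator is $\overline{\mathbb O}(\bar\delta(O\hookleftarrow K\hookrightarrow I,c)):=\bar\rho(\bar\delta(I\hookleftarrow K\hookrightarrow I,c))$. *)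

From mathcomp Require Import all_boot.
From mathcomp Require Import boolp.
Set Implicit Arguments. Unset Strict Implicit. Unset Printing Implicit Defensive.

(* Typed undirected multigraphs over the Chem type graph T_A.               *)
(* T_A has one vertex and one (loop) edge per atom type (A) and per bond    *)
(* type ('I_3 = {single, double, triple}).  Since T_A has a single vertex,  *)
(* a typing morphism X -> T_A is exactly a labelling of the edges of X by   *)
(* A + 'I_3 (the vertex component is forced, and the endpoint condition     *)
(* i_T(t e) = {*} = t_V(i(e)) holds automatically as i(e) is nonempty).     *)

Definition edge_type (A : finType) : finType := (A + 'I_3)%type.

Record tgraph (A : finType) := TGraph {
  V : finType;
  E : finType;
  ends : E -> {set V};
  ends_ok : forall e, 0 < #|ends e| <= 2;
  typ : E -> edge_type A
}.
Arguments V {A} t.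
Arguments E {A} t.
Arguments ends {A} t _.
Arguments typ {A} t _.

Section Chem.
Variable A : finType.
Implicit Types G H X Y : tgraph A.

Definition hom G H := ((V G -> V H) * (E G -> E H))%type.

Definition ishom G H (f : hom G H) : Prop :=
  (forall e, ends H (f.2 e) = [set f.1 x | x in ends G e]) /\
  (forall e, typ H (f.2 e) = typ G e).

(* the class M: component-wise injective morphisms *)
Definition mono G H (f : hom G H) : Prop := injective f.1 /\ injective f.2.

Definition idh G : hom G G := (id, id).
Definition comp G H Y (g : hom H Y) (f : hom G H) : hom G Y :=
  (fun v => g.1 (f.1 v), fun e => g.2 (f.2 e)).
Definition heq G H (f g : hom G H) : Prop := f.1 =1 g.1 /\ f.2 =1 g.2.

Lemma empty_ends_ok (e : void) : 0 < #|(set0 : {set void})| <= 2.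
Proof. by case: e. Qed.
Definition empty : tgraph A :=
  @TGraph A void void (fun _ => set0) empty_ends_ok (fun e => match e with end).
Definition init X : hom empty X :=
  (fun v : void => match v with end, fun e : void => match e with end).

Definition is_pushout P B C D (f : hom P B) (g : hom P C) (h : hom B D)
    (k : hom C D) : Prop :=
  [/\ ishom f /\ ishom g, ishom h, ishom k,
      heq (comp h f) (comp k g) &
      forall Z (u : hom B Z) (v : hom C Z), ishom u -> ishom v ->
        heq (comp u f) (comp v g) ->
        exists x : hom D Z, [/\ ishom x, heq (comp x h) u, heq (comp x k) v &
          forall y : hom D Z, ishom y -> heq (comp y h) u -> heq (comp y k) v ->
            heq y x]].

Inductive cond : tgraph A -> Type :=
| CTrue P : cond P
| CEx P Q (f : hom P Q) : ishom f -> mono f -> cond Q -> cond P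
| CNot P : cond P -> cond P
| CAnd P : cond P -> cond P -> cond P.

Fixpoint sat P (c : cond P) X {struct c} : hom P X -> Prop :=
  match c in cond P return hom P X -> Prop with
  | CTrue _ => fun _ => True
  | CEx P Q f _ _ c' => fun m =>
      exists q : hom Q X, [/\ ishom q, mono q, heq (comp q f) m & sat c' q]
  | CNot _ c' => fun m => ~ sat c' m
  | CAnd _ c1 c2 => fun m => sat c1 m /\ sat c2 m
  end.

Definition models X (c : cond empty) : Prop := sat c (init X).

Record rule := Rule { rO : tgraph A; rK : tgraph A; rI : tgraph A;
                      lO : hom rK rO; lI : hom rK rI }.

Definition linear_rule (r : rule) : Prop :=
  [/\ ishom (lO r), ishom (lI r), mono (lO r) & mono (lI r)].

Definition vertex_iso (r : rule) : Prop :=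
  bijective (lO r).1 /\ bijective (lI r).1.

Definition rid (I : tgraph A) : rule := @Rule I I I (idh I) (idh I).

Definition jump (r : rule) : rule := @Rule (rI r) (rK r) (rI r) (lI r) (lI r).

(* semantic conditions on matches (what a nested condition over I denotes) *)
Definition mcond (I : tgraph A) := forall X, hom I X -> Prop.

Definition pushout_complement (r : rule) X (m : hom (rI r) X) : Prop :=
  exists (D : tgraph A) (g : hom (rK r) D) (k : hom D X),
    is_pushout (lI r) g m k.

Definition dpo_comatch (r : rule) X (m : hom (rI r) X) Y (n : hom (rO r) Y)
  : Prop :=
  exists (D : tgraph A) (g : hom (rK r) D) (k : hom D X) (k' : hom D Y),
    is_pushout (lI r) g m k /\ is_pushout (lO r) g n k'.

Definition dpo_result (r : rule) X (m : hom (rI r) X) Y : Prop :=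
  exists n : hom (rO r) Y, dpo_comatch m n.

(* DPO-admissibility of (r, c) along m (m in M is required separately) *)
Definition dpo_admissible (r : rule) (c : mcond (rI r)) X (m : hom (rI r) X)
  : Prop := c X m /\ pushout_complement m.

Variable cChem : cond empty.

(* m |= Shift(f, c)  iff  m o f |= c *)
Definition shift_sat P Q (f : hom P Q) (c : cond P) : mcond Q :=
  fun X m => sat c (comp m f).

(* m |= Trans(r, c_O)  iff the comatch satisfies c_O (admissible matches);
   stated as: every comatch of a DPO step along m satisfies c_O.            *)
Definition trans_sat (r : rule) (cO : mcond (rO r)) : mcond (rI r) :=
  fun X m => forall Y (n : hom (rO r) Y), dpo_comatch m n -> cO Y n.

Definition completion (r : rule) (cI : mcond (rI r)) : mcond (rI r) :=
  fun X m =>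
    shift_sat (init (rI r)) cChem m ->
    [/\ cI X m,
        trans_sat (shift_sat (init (rO r)) cChem) m &
        shift_sat (init (rI r)) cChem m].

(* Matches I -> X range over the finite type of pairs of finite functions. *)
Definition as_hom G H (p : {ffun V G -> V H} * {ffun E G -> E H}) : hom G H :=
  (fun v => p.1 v, fun e => p.2 e).

(* Restricted DPO representation rho_bar(delta_bar(r, c)) applied to |X>:
   sum over DPO-admissible matches m in M of the completed rule of |r_m(X)>.
   rho_coeff r c X Y = coefficient of the basis vector |Y> (Y a state),
   i.e. number of admissible matches whose result is isomorphic to Y.       *)
Definition rho_coeff (r : rule) (c : mcond (rI r)) X Y : nat :=
  #|[set p | `[< let m : hom (rI r) X := as_hom p in
                 [/\ ishom m, mono m, dpo_admissible (completion (r := r) c) m &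
                     dpo_result m Y] >]]|.

(* <| rho_bar(delta_bar(r, c)) |X>  with  <|Z> := 1 on every basis vector:
   the number of admissible matches.                                        *)
Definition rho_bra (r : rule) (c : mcond (rI r)) X : nat :=
  #|[set p | `[< let m : hom (rI r) X := as_hom p in
                 [/\ ishom m, mono m & dpo_admissible (completion (r := r) c) m] >]]|.

(* Restricted DPO jump-closure:  Obar(delta_bar(O<-K->I, c))
   := rho_bar(delta_bar(I<-K->I, c)).                                       *)
Definition Obar_coeff (r : rule) (c : mcond (rI r)) X Y : nat :=
  rho_coeff (r := jump r) c X Y.
Definition Obar_bra (r : rule) (c : mcond (rI r)) X : nat :=
  rho_bra (r := jump r) c X.

End Chem.

From Pilot Require Import Defs.
From mathcomp Require Import all_boot.
From mathcomp Require Import boolp.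
Set Implicit Arguments. Unset Strict Implicit. Unset Printing Implicit Defensive.

(* A jump rule [I <- K -> I] rewrites [X] into a pushout of the same span
   [K -> I], [K -> D] of which [X] is already a pushout, so the result is [X]
   itself up to isomorphism.  For a state [X] the constraint-preserving
   completion therefore adds nothing to [c] (the result is again a state), and
   every admissible match contributes to the coefficient of [X] only.  The two jump closures can thus
   only differ through the existence of pushout complements: for [r_id] it is
   trivial, and for [r] it holds because [K -> I] is onto on vertices, so that
   deleting the edges of [X] matched by [I] but not by [K] gives one.  Both
   operators hence count the same monic matches satisfying [c]. *)

Local Notation comp := Defs.comp.

Section Morphisms.
Variable A : finType.
Implicit Types G H X Y Z : tgraph A.

Lemma heqP G H (f g : hom G H) : heq f g <-> f = g.
Proof.
split=> [|->]; last by split.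
by case: f g => f1 f2 [g1 g2] [/funext/= -> /funext/= ->].
Qed.

Lemma compA G H Y Z (h : hom Y Z) (g : hom H Y) (f : hom G H) :
  comp h (comp g f) = comp (comp h g) f.
Proof. by []. Qed.

Lemma comp_idh G H (f : hom G H) : comp f (idh G) = f.
Proof. by case: f. Qed.

Lemma idh_comp G H (f : hom G H) : comp (idh H) f = f.
Proof. by case: f. Qed.

Lemma comp_init G X (m : hom G X) : comp m (init G) = init X.
Proof. by apply/heqP; split; case. Qed.

Lemma ishom_idh G : ishom (idh G).
Proof. by split=> e //=; rewrite imset_id. Qed.

Lemma ishom_comp G H Y (g : hom H Y) (f : hom G H) :
  ishom f -> ishom g -> ishom (comp g f).
Proof.
case=> f_ends f_typ [g_ends g_typ]; split=> e /=; last by rewrite g_typ f_typ.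
by rewrite g_ends f_ends -imset_comp.
Qed.

Lemma mono_comp G H Y (g : hom H Y) (f : hom G H) :
  mono f -> mono g -> mono (comp g f).
Proof. by case=> f1 f2 [g1 g2]; split; apply: inj_comp. Qed.

Definition is_iso X Y (f : hom X Y) (g : hom Y X) : Prop :=
  [/\ ishom f, ishom g, comp g f = idh X & comp f g = idh Y].

Definition iso X Y : Prop := exists (f : hom X Y) (g : hom Y X), is_iso f g.

Lemma is_iso_sym X Y (f : hom X Y) (g : hom Y X) : is_iso f g -> is_iso g f.
Proof. by case. Qed.

Lemma is_iso_mono X Y (f : hom X Y) (g : hom Y X) : is_iso f g -> mono f.
Proof.
case=> _ _ gf _; split.
- by apply: (can_inj (g := g.1)) => v; have := congr1 (fun h => h.1 v) gf.
- by apply: (can_inj (g := g.2)) => e; have := congr1 (fun h => h.2 e) gf.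
Qed.

End Morphisms.

Section Conditions.
Variable A : finType.
Implicit Types X Y : tgraph A.

Lemma sat_comp_iso P (c : cond P) X Y (f : hom X Y) (g : hom Y X)
    (m : hom P X) :
  is_iso f g -> sat c (comp f m) <-> sat c m.
Proof.
elim: c X Y f g m => {P} [//|P Q h _ _ c IH|P c IH|P c1 IH1 c2 IH2]
  X Y f g m fg /=.
- have [f_hom g_hom gf _] := fg.
  split=> -[q [q_hom q_mono /heqP qh q_sat]].
  + exists (comp g q); split.
    * exact: ishom_comp g_hom.
    * exact: mono_comp (is_iso_mono (is_iso_sym fg)).
    * by apply/heqP; rewrite -compA qh compA gf idh_comp.
    * exact/(IH _ _ g f _ (is_iso_sym fg)).
  + exists (comp f q); split.
    * exact: ishom_comp f_hom.
    * exact: mono_comp (is_iso_mono fg).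
    * by apply/heqP; rewrite -compA qh.
    * exact/(IH _ _ f g _ fg).
- by rewrite (IH _ _ _ _ _ fg).
- by rewrite (IH1 _ _ _ _ _ fg) (IH2 _ _ _ _ _ fg).
Qed.

Lemma models_iso X Y (c : cond (empty A)) : iso X Y -> models X c -> models Y c.
Proof.
by case=> f [g fg]; rewrite /models -(comp_init f) (sat_comp_iso _ _ fg).
Qed.

End Conditions.

Section Pushouts.
Variable A : finType.
Variables (P B C : tgraph A) (f : hom P B) (g : hom P C).

Lemma pushout_hom_ext D (h : hom B D) (k : hom C D) Z (y y' : hom D Z) :
  is_pushout f g h k -> ishom y -> ishom y' ->
  comp y h = comp y' h -> comp y k = comp y' k -> y = y'.
Proof.
case=> _ h_hom k_hom /heqP sq univ y_hom y'_hom yh yk.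
have sq_y : heq (comp (comp y h) f) (comp (comp y k) g).
  by apply/heqP; rewrite -!compA sq.
have [x [_ _ _ x_uniq]] :=
  univ Z _ _ (ishom_comp h_hom y_hom) (ishom_comp k_hom y_hom) sq_y.
have /heqP -> := x_uniq y y_hom ((heqP _ _).2 erefl) ((heqP _ _).2 erefl).
by apply/esym/heqP/x_uniq => //; apply/heqP; rewrite ?yh ?yk.
Qed.

Lemma pushout_unique D D' (h : hom B D) (k : hom C D) (h' : hom B D')
    (k' : hom C D') :
  is_pushout f g h k -> is_pushout f g h' k' -> iso D D'.
Proof.
move=> po po'; have [[f_hom g_hom] h_hom k_hom sq univ] := po.
have [_ h'_hom k'_hom sq' univ'] := po'.
have [x [x_hom /heqP xh /heqP xk _]] := univ _ _ _ h'_hom k'_hom sq'.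
have [y [y_hom /heqP yh /heqP yk _]] := univ' _ _ _ h_hom k_hom sq.
exists x, y; split=> //.
- apply: (pushout_hom_ext po); first exact: ishom_comp y_hom.
  + exact: ishom_idh.
  + by rewrite idh_comp -compA xh yh.
  + by rewrite idh_comp -compA xk yk.
- apply: (pushout_hom_ext po'); first exact: ishom_comp x_hom.
  + exact: ishom_idh.
  + by rewrite idh_comp -compA yh xh.
  + by rewrite idh_comp -compA yk xk.
Qed.

Lemma pushout_comp_iso D D' (h : hom B D) (k : hom C D) (u : hom D D')
    (v : hom D' D) :
  is_pushout f g h k -> is_iso u v -> is_pushout f g (comp u h) (comp u k).
Proof.
move=> po [u_hom v_hom vu uv]; have [fg_hom h_hom k_hom /heqP sq univ] := po.
split; [done | exact: ishom_comp | exact: ishom_comp | |].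
  by apply/heqP; rewrite -!compA sq.
move=> Z p q p_hom q_hom pq.
have [x [x_hom /heqP xh /heqP xk _]] := univ _ _ _ p_hom q_hom pq.
exists (comp x v); split; first exact: ishom_comp.
- by apply/heqP; rewrite -compA (compA v) vu idh_comp.
- by apply/heqP; rewrite -compA (compA v) vu idh_comp.
- move=> y y_hom /heqP yuh /heqP yuk; apply/heqP.
  have -> : x = comp y u.
    apply: (pushout_hom_ext po x_hom (ishom_comp u_hom y_hom)).
    + by rewrite xh -yuh.
    + by rewrite xk -yuk.
  by rewrite -compA uv comp_idh.
Qed.

End Pushouts.

Lemma pushout_idh (A : finType) (I X : tgraph A) (m : hom I X) :
  ishom m -> is_pushout (idh I) m m (idh X).
Proof.
move=> m_hom.
split; [by split; first exact: ishom_idh | done | exact: ishom_idh | by split |].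
move=> Z u v u_hom v_hom /heqP; rewrite comp_idh => ->.
by exists v; split.
Qed.

Section EdgeDeletion.
Variable A : finType.
Variables (K I X : tgraph A) (l : hom K I) (m : hom I X).

(* The pushout complement of [K -> I -> X]: delete the edges of [X] that are
   matched by [I] but not by [K].  No vertex is deleted, which is why [l] has
   to be surjective on vertices. *)
Definition kept_edge (e : E X) : bool :=
  (e \notin codom m.2) || (e \in codom (m.2 \o l.2)).

Definition deletion : tgraph A :=
  @TGraph A (V X) {e : E X | kept_edge e} (fun d => ends X (val d))
    (fun d => ends_ok (val d)) (fun d => typ X (val d)).

Lemma kept_edge_image j : kept_edge (m.2 (l.2 j)).
Proof. by rewrite /kept_edge (codom_f (m.2 \o l.2)) orbT. Qed.

Lemma kept_edge_unmatched e : (fun i => m.2 i == e) =1 xpred0 -> kept_edge e.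
Proof.
move=> unmatched; apply/orP; left; apply/codomP => -[i ei].
by have := unmatched i; rewrite ei eqxx.
Qed.

Lemma matched_edge e : ~~ kept_edge e -> exists i, e = m.2 i.
Proof. by rewrite negb_or negbK => /andP [/codomP]. Qed.

Lemma deletion_edge_ind (Q : E X -> Prop) :
  (forall d : E deletion, Q (val d)) -> (forall i, Q (m.2 i)) -> forall e, Q e.
Proof.
move=> Q_kept Q_matched e; case: (boolP (kept_edge e)) => [ke | ].
- exact: (Q_kept (Sub e ke)).
- by case/matched_edge=> i ->.
Qed.

Definition deletion_in : hom K deletion :=
  (fun v => m.1 (l.1 v), fun j => Sub (m.2 (l.2 j)) (kept_edge_image j)).

Definition deletion_incl : hom deletion X := (fun w => w, val).

Definition glue_edge Z (u : hom I Z) (v : hom deletion Z) (e : E X) : E Z :=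
  match pickP (fun i => m.2 i == e) with
  | Pick i _ => u.2 i
  | Nopick unmatched => v.2 (Sub e (kept_edge_unmatched unmatched))
  end.

Hypotheses (l_hom : ishom l) (l_onto : forall w, exists v, l.1 v = w).
Hypotheses (m_hom : ishom m) (m_mono : mono m).

Section Glue.
Variables (Z : tgraph A) (u : hom I Z) (v : hom deletion Z).
Hypotheses (u_hom : ishom u) (v_hom : ishom v)
  (uv : comp u l = comp v deletion_in).

Lemma glue_edge_matched i : glue_edge u v (m.2 i) = u.2 i.
Proof.
rewrite /glue_edge; case: pickP => [i' /eqP /m_mono.2 -> // | unmatched].
by have := unmatched i; rewrite eqxx.
Qed.

Lemma glue_edge_kept d : glue_edge u v (val d) = v.2 d.
Proof.
rewrite /glue_edge; case: pickP => [i /eqP mi | unmatched]; last first.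
  by congr v.2; apply: val_inj.
have := valP d; rewrite /kept_edge -mi codom_f /= => /codomP [j /m_mono.2 ij].
have -> : d = deletion_in.2 j by apply: val_inj; rewrite /= -mi ij.
by rewrite ij; exact: (congr1 (fun h => h.2 j) uv).
Qed.

Lemma glue_vertex w : v.1 (m.1 w) = u.1 w.
Proof.
by have [x <-] := l_onto w; exact: (congr1 (fun h => h.1 x) (esym uv)).
Qed.

Definition glue : hom X Z := (v.1, glue_edge u v).

Lemma glue_ishom : ishom glue.
Proof.
split; elim/deletion_edge_ind => [d | i] /=.
- by rewrite glue_edge_kept v_hom.1.
- rewrite glue_edge_matched u_hom.1 m_hom.1 -imset_comp.
  by apply: eq_imset => w; rewrite /= glue_vertex.
- by rewrite glue_edge_kept v_hom.2.
- by rewrite glue_edge_matched u_hom.2 m_hom.2.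
Qed.

End Glue.

Lemma deletion_pushout : is_pushout l deletion_in m deletion_incl.
Proof.
have in_hom : ishom deletion_in.
  by split=> j /=; rewrite ?m_hom.1 ?l_hom.1 -?imset_comp ?m_hom.2 ?l_hom.2.
split; [done | done | by split=> d //=; exact: esym (imset_id _) | by split |].
move=> Z u v u_hom v_hom /heqP uv; exists (glue u v); split.
- exact: glue_ishom.
- by split=> w /=; [exact: glue_vertex | exact: glue_edge_matched].
- by split=> d /=; last exact: glue_edge_kept.
- move=> y _ ym yincl; split=> [w | ]; first exact: yincl.1.
  elim/deletion_edge_ind => [d | i] /=.
  + by rewrite glue_edge_kept //; exact: yincl.2.
  + by rewrite glue_edge_matched //; exact: ym.2.
Qed.

End EdgeDeletion.

Section JumpClosure.
Variables (A : finType) (cChem : cond (empty A)) (s : rule A) (X : tgraph A).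

Lemma dpo_result_jump (m : hom (rI s) X) Y :
  pushout_complement (r := jump s) m ->
  dpo_result (r := jump s) m Y <-> iso X Y.
Proof.
case=> D [g [k po]]; split.
- by case=> n [D' [g' [k' [k'' [po1 po2]]]]]; exact: pushout_unique po1 po2.
- case=> u [v uv]; exists (comp u m), D, g, k, (comp u k).
  by split=> //; exact: pushout_comp_iso po uv.
Qed.

Hypothesis X_state : models X cChem.

Lemma admissible_completion_jump (c : mcond (rI s)) (m : hom (rI s) X) :
  dpo_admissible (completion cChem (r := jump s) c) m <->
  c X m /\ pushout_complement (r := jump s) m.
Proof.
have m_state : shift_sat (init (rI s)) cChem m by rewrite /shift_sat comp_init.
split=> [[/(_ m_state) [cm _ _] pc] // | [cm pc]].
split=> // _; split=> // Y n [D [g [k [k' [po po']]]]].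
rewrite /shift_sat comp_init.
exact: models_iso (pushout_unique po po') X_state.
Qed.

Definition count_matches (I : tgraph A) (P : hom I X -> Prop) : nat :=
  #|[set p : {ffun V I -> V X} * {ffun E I -> E X} | `[< P (as_hom p) >]]|.

Lemma eq_count_matches I (P Q : hom I X -> Prop) :
  (forall m, P m <-> Q m) -> count_matches P = count_matches Q.
Proof.
by move=> PQ; apply: eq_card => p; rewrite !inE; apply/asboolP/asboolP => /PQ.
Qed.

Hypothesis monic_pushout_complement : forall m : hom (rI s) X,
  ishom m -> mono m -> pushout_complement (r := jump s) m.

Lemma Obar_bra_jump (c : mcond (rI s)) :
  Obar_bra cChem c X = count_matches (fun m => [/\ ishom m, mono m & c X m]).
Proof.
apply: (@eq_count_matches _ (fun m => [/\ ishom m, mono m &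
  dpo_admissible (completion cChem (r := jump s) c) m])) => m.
split=> -[m_hom m_mono adm]; split=> //.
  by case/admissible_completion_jump: adm.
apply/admissible_completion_jump; split=> //.
exact: monic_pushout_complement.
Qed.

Lemma Obar_coeff_jump (c : mcond (rI s)) Y :
  Obar_coeff cChem c X Y =
  count_matches (fun m => [/\ ishom m, mono m, c X m & iso X Y]).
Proof.
apply: (@eq_count_matches _ (fun m => [/\ ishom m, mono m,
  dpo_admissible (completion cChem (r := jump s) c) m &
  dpo_result (r := jump s) m Y])) => m.
split=> [[m_hom m_mono /admissible_completion_jump [cm pc]] |].
  by move/(dpo_result_jump _ pc).
case=> m_hom m_mono cm XY; have pc := monic_pushout_complement m_hom m_mono.
split=> //; first exact/admissible_completion_jump.
exact/(dpo_result_jump _ pc).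
Qed.

End JumpClosure.

Theorem mainTheorem10 (A : finType) (cChem : cond (empty A)) (r : rule A)
    (cI : cond (rI r)) :
  linear_rule r -> vertex_iso r ->
  let cbar : mcond (rI r) := completion cChem (fun X m => sat cI m) in
  forall X : tgraph A, models X cChem ->
    Obar_bra cChem cbar X = Obar_bra cChem (r := rid (rI r)) cbar X /\
    (forall Y : tgraph A, models Y cChem ->
       Obar_coeff cChem cbar X Y = Obar_coeff cChem (r := rid (rI r)) cbar X Y).
Proof.
move=> [_ lI_hom _ _] [_ [l' _ l'K]] cbar X X_state.
have r_complement (m : hom (rI r) X) :
    ishom m -> mono m -> pushout_complement (r := jump r) m.
  move=> m_hom m_mono; exists (deletion (lI r) m), (deletion_in (lI r) m).
  exists (deletion_incl (lI r) m); apply: deletion_pushout => // w.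
  by exists (l' w); exact: l'K.
have id_complement (m : hom (rI r) X) :
    ishom m -> mono m -> pushout_complement (r := jump (rid (rI r))) m.
  by move=> m_hom _; exists X, m, (idh X); exact: pushout_idh.
have Obar_r := Obar_bra_jump X_state r_complement.
have Obar_id := Obar_bra_jump (s := rid (rI r)) X_state id_complement.
have coeff_r := Obar_coeff_jump X_state r_complement.
have coeff_id := Obar_coeff_jump (s := rid (rI r)) X_state id_complement.
by split=> [|Y _]; rewrite ?Obar_r ?Obar_id ?coeff_r ?coeff_id.
Qed.
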